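(* If $x\in S_n$ avoids both $123$ and the bivincular pattern $132^{\star}$, then $x\in\mathrm{Sort}_n(132,321)$.
   Context: An occurrence of the bivincular pattern $132^{\star}$ in $x=x_1\cdots x_n$ is a pair of indices $a<b<n$ with $x_a<x_{b+1}$ and $x_b=x_{b+1}+1$. A permutation contains a classical pattern $p$ if it has a subsequence order-isomorphic to $p$. For a set $T$ of patterns, the map $s_T$ is defined as follows: the entries of the input permutation are read from left to right, with an initially empty stack. At each step, if the input is nonempty and pushing the next input entry onto the stack produces a stack whose contents, read from top to bottom, avoid every pattern in $T$, that entry is pushed; otherwise the top entry of the stack is popped and appended to the output. When the input is exhausted, the remaining stack entries are popped one at a time to the output. Write $s_{\sigma,\tau}=s_{\{\sigma,\tau\}}$ and $s=s_{\{21\}}$ (West's stack-sorting map). $\mathrm{Sort}_n(\sigma,\tau)$ is the set of $x\in S_n$ with $s(s_{\sigma,\tau}(x))=12\cdots n$. *)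

From mathcomp Require Import all_boot.
Set Implicit Arguments. Unset Strict Implicit. Unset Printing Implicit Defensive.

Definition order_iso (t p : seq nat) : bool :=
  (size t == size p) &&
  all (fun i => all (fun j => (nth 0 t i < nth 0 t j) == (nth 0 p i < nth 0 p j))
                    (iota 0 (size t))) (iota 0 (size t)).

Fixpoint allmasks (k : nat) : seq bitseq :=
  if k is k'.+1 then [seq b :: m | b <- [:: true; false], m <- allmasks k']
  else [:: [::]].

Definition contains (x p : seq nat) : bool :=
  has (fun m => order_iso (mask m x) p) (allmasks (size x)).

Definition avoids_all (T : seq (seq nat)) (x : seq nat) : bool :=
  all (fun p => ~~ contains x p) T.

(* One input step of s_T: the stack is a seq whose head is the top.
   Returns (new stack, new output). Pop while pushing a would create a stack
   (read top to bottom) containing a pattern of T. *)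
Fixpoint push_step (T : seq (seq nat)) (a : nat) (stk out : seq nat)
  : seq nat * seq nat :=
  if avoids_all T (a :: stk) then (a :: stk, out)
  else match stk with
       | [::] => (a :: stk, out)
       | b :: stk' => push_step T a stk' (rcons out b)
       end.

Definition sT (T : seq (seq nat)) (x : seq nat) : seq nat :=
  let '(stk, out) :=
    foldl (fun so a => push_step T a so.1 so.2) ([::], [::]) x in
  out ++ stk.

Definition west_s (x : seq nat) : seq nat := sT [:: [:: 2; 1]] x.

Definition is_perm (n : nat) (x : seq nat) : Prop := perm_eq x (iota 1 n).

Definition Sort_n (n : nat) (sigma tau : seq nat) (x : seq nat) : Prop :=
  is_perm n x /\ west_s (sT [:: sigma; tau] x) = iota 1 n.

(* occurrence of the bivincular pattern 132* (0-based indices):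
   a < b, b+1 < size x, x_a < x_{b+1}, x_b = x_{b+1} + 1 *)
Definition occ_132star (x : seq nat) (a b : nat) : Prop :=
  a < b /\ b.+1 < size x /\ nth 0 x a < nth 0 x b.+1 /\ nth 0 x b = (nth 0 x b.+1).+1.

Definition avoids_132star (x : seq nat) : Prop :=
  forall a b, ~ occ_132star x a b.

(* West's map sorts every 231-avoiding permutation, so it suffices to
   show that y := s_{132,321}(x) avoids 231.  Let x avoid 123 and 132*.  While
   x is read, the stack is the last entry t read on top of an increasing run r.
   When a arrives, the stack of s_{132,321} pops only t, and only if
   a < s < t for some s in r: the alternative s < t < a would be a 123 in x.
   If a is pushed, r1 := head r exceeds t: otherwise r1 < a < t, and the value
   a + 1 gives a 132* occurrence (t = a + 1), a 123 occurrence (a + 1 read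
   later), a popping witness (a + 1 in r), or an output entry below t, which is
   impossible since an output entry v is preceded by a smaller entry, so every
   later entry of x, t included, is smaller than v.  Hence the output is
   decreasing and above t, and y = output ++ t :: r avoids 231. *)
From mathcomp Require Import all_boot zify.
Set Implicit Arguments. Unset Strict Implicit. Unset Printing Implicit Defensive.

Lemma mem_allmasks k m : (m \in allmasks k) = (size m == k).
Proof.
elim: k m => [|k IHk] [|b m] //=.
- by rewrite !mem_cat; apply/negP => /or3P [/mapP [] | /mapP [] | ].
- rewrite !mem_cat eqSS -IHk; apply/idP/idP.
    by case/or3P => // /mapP [m' m'_in [_ ->]].
  by case: b => m_in; rewrite map_f ?orbT.
Qed.

Lemma containsP x p :
  reflect (exists2 w, subseq w x & order_iso w p) (contains x p).
Proof.
apply: (iffP hasP) => [[m _ iso_m] | [w /subseqP [m sz_m ->] iso_w]].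
  by exists (mask m x) => //; apply: mask_subseq.
by exists m; rewrite ?mem_allmasks ?sz_m.
Qed.

Lemma contains2P x p : size p = 2 ->
  reflect (exists e1 e2, subseq [:: e1; e2] x /\ order_iso [:: e1; e2] p)
          (contains x p).
Proof.
move=> sz_p; apply: (iffP (containsP x p)) => [[w sub_w iso_w] | [e1 [e2 []]]];
  last by exists [:: e1; e2].
move: (iso_w) => /andP [/eqP]; rewrite sz_p.
by case: w sub_w iso_w => [|e1 [|e2 []]] // *; exists e1, e2.
Qed.

Lemma contains3P x p : size p = 3 ->
  reflect (exists e1 e2 e3, subseq [:: e1; e2; e3] x /\ order_iso [:: e1; e2; e3] p)
          (contains x p).
Proof.
move=> sz_p; apply: (iffP (containsP x p)) => [[w sub_w iso_w] | [e1 [e2 [e3 []]]]];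
  last by exists [:: e1; e2; e3].
move: (iso_w) => /andP [/eqP]; rewrite sz_p.
by case: w sub_w iso_w => [|e1 [|e2 [|e3 []]]] // *; exists e1, e2, e3.
Qed.

Lemma not_contains3 x p e1 e2 e3 : ~~ contains x p -> size p = 3 ->
  subseq [:: e1; e2; e3] x -> ~~ order_iso [:: e1; e2; e3] p.
Proof.
move=> no_p sz_p sub_e; apply: contra no_p => iso_e.
by apply/contains3P => //; exists e1, e2, e3.
Qed.

Lemma order_iso21 e1 e2 : order_iso [:: e1; e2] [:: 2; 1] = (e2 < e1).
Proof. by rewrite /order_iso /= !ltnn /=; apply/idP/idP; lia. Qed.

Lemma order_iso123 e1 e2 e3 :
  order_iso [:: e1; e2; e3] [:: 1; 2; 3] = (e1 < e2 < e3).
Proof. by rewrite /order_iso /= !ltnn /=; apply/idP/idP; lia. Qed.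

Lemma order_iso132 e1 e2 e3 :
  order_iso [:: e1; e2; e3] [:: 1; 3; 2] = (e1 < e3 < e2).
Proof. by rewrite /order_iso /= !ltnn /=; apply/idP/idP; lia. Qed.

Lemma order_iso231 e1 e2 e3 :
  order_iso [:: e1; e2; e3] [:: 2; 3; 1] = (e3 < e1 < e2).
Proof. by rewrite /order_iso /= !ltnn /=; apply/idP/idP; lia. Qed.

Lemma order_iso321 e1 e2 e3 :
  order_iso [:: e1; e2; e3] [:: 3; 2; 1] = (e3 < e2 < e1).
Proof. by rewrite /order_iso /= !ltnn /=; apply/idP/idP; lia. Qed.

Lemma subseq2_sorted r u v : pairwise ltn r -> subseq [:: u; v] r -> u < v.
Proof. by move=> r_sorted /subseq_pairwise /(_ r_sorted) /= /andP [/andP []]. Qed.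

Lemma subseq3_behead (T : eqType) (e1 e2 e3 t : T) r :
  subseq [:: e1; e2; e3] (t :: r) -> subseq [:: e2; e3] r.
Proof. by rewrite /=; case: ifP => _ // /cons_subseq. Qed.

Lemma subseq3_cat (T : eqType) (u v w : T) p q : u \in p -> subseq [:: v; w] q ->
  subseq [:: u; v; w] (p ++ q).
Proof.
by move=> u_in sub_vw; rewrite -[[:: u; v; w]]/([:: u] ++ _) cat_subseq ?sub1seq.
Qed.

Lemma subseq2_rcons (T : eqType) (s t : T) p : s \in p -> subseq [:: s; t] (rcons p t).
Proof.
by move=> s_in; rewrite -cats1 -[[:: s; t]]/([:: s] ++ [:: t]) cat_subseq // sub1seq.
Qed.

Lemma subseq_cat_notin (T : eqType) (a : T) s o z :
  subseq (a :: s) (o ++ z) -> a \notin o -> subseq (a :: s) z.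
Proof.
elim: o => [|u o IHo] //=; rewrite inE negb_or => sub_a /andP [a_neq_u a_notin].
by apply: IHo => //; move: sub_a; rewrite (negbTE a_neq_u).
Qed.

Lemma perm_cat_cons_rcons (T : eqType) (s1 s2 : seq T) a :
  perm_eq (s1 ++ a :: s2) (rcons (s1 ++ s2) a).
Proof. by rewrite -cats1 -catA perm_cat2l cats1 perm_sym perm_rcons. Qed.

Lemma perm_rcons2 (T : eqType) (s1 s2 : seq T) a :
  perm_eq s1 s2 -> perm_eq (rcons s1 a) (rcons s2 a).
Proof. by rewrite -!cats1 perm_cat2r. Qed.

Lemma perm_filter_split (s : seq nat) a : a \notin s ->
  perm_eq ([seq z <- s | z < a] ++ [seq z <- s | a < z]) s.
Proof.
move=> a_notin; rewrite perm_sym -{1}(perm_filterC (fun z => z < a) s) perm_cat2l.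
rewrite (@eq_in_filter _ _ (fun z => a < z)) // => z z_in /=.
by rewrite -leqNgt leq_eqVlt eq_sym (negbTE (memPn a_notin z z_in)).
Qed.

Definition sT_state (T : seq (seq nat)) (pre : seq nat) : seq nat * seq nat :=
  foldl (fun so a => push_step T a so.1 so.2) ([::], [::]) pre.

Lemma sT_stateE T pre : sT T pre = (sT_state T pre).2 ++ (sT_state T pre).1.
Proof. by rewrite /sT /sT_state; case: foldl. Qed.

Lemma sT_state_rcons T pre a :
  sT_state T (rcons pre a) = push_step T a (sT_state T pre).1 (sT_state T pre).2.
Proof. by rewrite /sT_state foldl_rcons. Qed.

Lemma push_step_cons T a b stk out :
  push_step T a (b :: stk) out =
  if avoids_all T (a :: b :: stk) then (a :: b :: stk, out)
  else push_step T a stk (rcons out b).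
Proof. by []. Qed.

Notation W21 := [:: [:: 2; 1]].

Lemma avoids21_cons a stk : pairwise ltn stk ->
  avoids_all W21 (a :: stk) = all (leq a) stk.
Proof.
move=> stk_sorted; rewrite /avoids_all /= andbT.
apply/idP/allP => [/negP no21 s s_in | a_le].
  rewrite leqNgt; apply/negP => lt_s_a; apply: no21; apply/contains2P => //.
  by exists a, s; rewrite order_iso21 /= eqxx sub1seq.
apply/negP => /contains2P [] // e1 [e2 []]; rewrite order_iso21 /=.
case: ifP => [/eqP -> | _] sub_e lt_e.
  by move: (a_le e2); rewrite -sub1seq => /(_ sub_e); lia.
by move: (subseq2_sorted stk_sorted sub_e); lia.
Qed.

Lemma push_step21 a stk out : pairwise ltn stk -> a \notin stk ->
  push_step W21 a stk out =
  (a :: [seq s <- stk | a < s], out ++ [seq s <- stk | s < a]).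
Proof.
elim: stk out => [|b stk IHstk] out stk_sorted; first by rewrite /= cats0.
rewrite inE negb_or => /andP [a_neq_b a_notin].
case/andP: (stk_sorted) => /allP b_lt stk'_sorted.
rewrite push_step_cons avoids21_cons //=.
case: (ltngtP a b) => [lt_a_b | lt_b_a | eq_ab] /=; last by rewrite eq_ab eqxx in a_neq_b.
- have a_lt s : s \in stk -> a < s by move/b_lt; apply: ltn_trans.
  have -> : all (leq a) stk by apply/allP => s /a_lt /ltnW.
  have -> : [seq s <- stk | s < a] = [::].
    apply/eqP; rewrite -[_ == _]negbK -has_filter.
    by apply/hasPn => s /a_lt /ltnW; rewrite leqNgt.
  by rewrite cats0 (all_filterP _) //; apply/allP.
- by rewrite IHstk // cat_rcons.
Qed.

Lemma west_state_sorted y pre rest : uniq y -> ~~ contains y [:: 2; 3; 1] ->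
  y = pre ++ rest ->
  [/\ perm_eq ((sT_state W21 pre).2 ++ (sT_state W21 pre).1) pre,
      pairwise ltn ((sT_state W21 pre).2 ++ (sT_state W21 pre).1) &
      allrel ltn (sT_state W21 pre).2 rest].
Proof.
move=> y_uniq no231; elim/last_ind: pre rest => [|pre a IHpre] rest; first by [].
rewrite cat_rcons sT_state_rcons => def_y.
case: (IHpre _ def_y); case: (sT_state W21 pre) => stk out /= perm_pre sorted_os.
rewrite allrel_consr => /andP [/allP out_lt_a out_lt_rest].
move: (sorted_os); rewrite pairwise_cat.
case/and3P => /allrelP out_lt_stk out_sorted stk_sorted.
have stk_pre s : s \in stk -> s \in pre.
  by rewrite -(perm_mem perm_pre) mem_cat orbC => ->.
move: y_uniq; rewrite def_y cat_uniq /= negb_or.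
case/and3P => _ /andP [a_notin_pre /hasPn rest_fresh] _.
have a_notin_stk : a \notin stk by apply: contra a_notin_pre; apply: stk_pre.
rewrite push_step21 //=; split.
- rewrite -(perm_cat2r [:: a]) !cats1 in perm_pre; apply: perm_trans perm_pre.
  rewrite -catA -cats1 -catA perm_cat2l -cat1s perm_catCA perm_catC /=.
  by rewrite perm_cat2r perm_filter_split.
- rewrite -catA pairwise_cat out_sorted /=; apply/andP; split.
  + apply/allrelP => o z o_in; rewrite mem_cat inE.
    have o_lt_stk z' : z' \in stk -> o < z' by apply: out_lt_stk.
    by case/or3P => [| /eqP -> | ]; rewrite ?mem_filter;
      [case/andP => _ /o_lt_stk | apply: out_lt_a | case/andP => _ /o_lt_stk].
  + rewrite pairwise_cat /= filter_all !pairwise_filter // !andbT.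
    apply/allrelP => s z; rewrite mem_filter inE => /andP [lt_s_a _].
    by case/predU1P => [-> // | ]; rewrite mem_filter => /andP [/(ltn_trans lt_s_a)].
- rewrite allrel_catl out_lt_rest /=; apply/allrelP => s c.
  rewrite mem_filter => /andP [lt_s_a /stk_pre s_in] c_in.
  have: subseq [:: s; a; c] y by rewrite def_y subseq3_cat //= eqxx sub1seq.
  move/(not_contains3 no231 erefl).
  rewrite order_iso231 lt_s_a andbT -leqNgt leq_eqVlt => /orP [/eqP eq_cs | //].
  by move: (rest_fresh c c_in); rewrite -eq_cs s_in.
Qed.

Lemma west_s_231_avoiding n y : is_perm n y -> ~~ contains y [:: 2; 3; 1] ->
  west_s y = iota 1 n.
Proof.
move=> y_perm no231; have y_uniq : uniq y by rewrite (perm_uniq y_perm) iota_uniq.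
have [perm_y sorted_y _] := west_state_sorted y_uniq no231 (esym (cats0 y)).
rewrite /west_s sT_stateE; apply: (irr_sorted_eq ltn_trans ltnn).
- by rewrite sorted_pairwise //; apply: ltn_trans.
- exact: iota_ltn_sorted.
- by apply: perm_mem; apply: perm_trans perm_y y_perm.
Qed.

Notation T132_321 := [:: [:: 1; 3; 2]; [:: 3; 2; 1]].

(* Both patterns end with a descent, which an increasing stack cannot supply. *)
Lemma avoids132_321_sorted t r : pairwise ltn r -> avoids_all T132_321 (t :: r).
Proof.
move=> r_sorted; rewrite /avoids_all /= andbT.
by apply/andP; split; apply/negP => /contains3P [] // e1 [e2 [e3 []]]
  /subseq3_behead /(subseq2_sorted r_sorted); rewrite ?order_iso132 ?order_iso321; lia.
Qed.

Lemma subseq3_push_descent a t r e1 e2 e3 : pairwise ltn r ->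
  subseq [:: e1; e2; e3] (a :: t :: r) -> e3 < e2 -> [/\ e1 = a, e2 = t & e3 \in r].
Proof.
move=> r_sorted /=; case: ifP => [/eqP -> | _] sub_e lt32; last first.
  by move: (subseq2_sorted r_sorted (subseq3_behead sub_e)); lia.
move: sub_e; case: ifP => [/eqP -> | _] sub_e; last first.
  by move: (subseq2_sorted r_sorted sub_e); lia.
by rewrite -sub1seq.
Qed.

Lemma avoids132_321_push a t r : pairwise ltn r ->
  avoids_all T132_321 (a :: t :: r) = ~~ has (fun s => (s < t < a) || (a < s < t)) r.
Proof.
move=> r_sorted; rewrite /avoids_all /= andbT -negb_or; congr negb; apply/idP/hasP.
- case/orP => /contains3P [] // e1 [e2 [e3 [sub_e]]];
    rewrite ?order_iso132 ?order_iso321 => /andP [? ?];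
    case: (subseq3_push_descent r_sorted sub_e) => // ? ? e3_in; subst;
    by exists e3 => //; lia.
- have sub_s s : s \in r -> subseq [:: a; t; s] (a :: t :: r) by rewrite /= !eqxx sub1seq.
  case=> s s_in /orP [] lt_s; apply/orP; [right | left]; apply/contains3P => //;
    by exists a, t, s; rewrite sub_s ?order_iso132 ?order_iso321.
Qed.

Lemma push_step132_321 a t r out : pairwise ltn r ->
  push_step T132_321 a (t :: r) out =
  if has (fun s => (s < t < a) || (a < s < t)) r then (a :: r, rcons out t)
  else (a :: t :: r, out).
Proof.
move=> r_sorted; rewrite push_step_cons avoids132_321_push //.
case: has => //=; case: r r_sorted => [|s r] r_sorted; first by rewrite /= /avoids_all.
by rewrite push_step_cons avoids132_321_sorted.
Qed.

Lemma avoids231_out_stack out t r :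
  pairwise gtn out -> {in out, forall v, t < v} -> pairwise ltn r ->
  ~~ contains (out ++ t :: r) [:: 2; 3; 1].
Proof.
move=> out_sorted out_gt r_sorted; apply/negP => /contains3P [] // b [a [c []]].
rewrite order_iso231 => + /andP [lt_cb lt_ba].
elim: out out_sorted out_gt => [|v out IHout] /=.
  by move=> _ _ /subseq3_behead /(subseq2_sorted r_sorted); lia.
case/andP => /allP v_gt out_sorted out_gt.
case: eqP => [eq_bv | _].
  have a_notin : a \notin out by apply/negP => /v_gt /=; lia.
  move/subseq_cat_notin/(_ a_notin) => /=; case: eqP => [eq_at | _] sub_ac.
    by move: (out_gt v (mem_head _ _)); lia.
  by move: (subseq2_sorted r_sorted sub_ac); lia.
by apply: IHout => // w w_in; apply: out_gt; rewrite inE w_in orbT.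
Qed.

Section Run132_321.

Variables (n : nat) (x : seq nat).
Hypotheses (x_perm : is_perm n x) (no123 : ~~ contains x [:: 1; 2; 3])
  (no132star : avoids_132star x).

Lemma x_uniq : uniq x.
Proof. by rewrite (perm_uniq x_perm) iota_uniq. Qed.

Lemma uniq_prefix p rest : x = p ++ rest -> uniq p.
Proof. by move=> def_x; move: x_uniq; rewrite def_x cat_uniq => /andP []. Qed.

Lemma disjoint_cat p q v c : x = p ++ q -> v \in p -> c \in q -> c != v.
Proof.
move=> def_x v_in c_in; move: x_uniq; rewrite def_x cat_uniq => /and3P [_ /hasPn fresh _].
by apply: contraNneq (fresh c c_in) => ->.
Qed.

Lemma le_after_rise q1 q2 w v c : x = q1 ++ q2 ->
  subseq [:: w; v] q1 -> c \in q2 -> w < v -> c <= v.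
Proof.
move=> def_x sub_wv c_in lt_wv.
have : subseq [:: w; v; c] x.
  by rewrite def_x -[[:: w; v; c]]/([:: w; v] ++ _) cat_subseq ?sub1seq.
by move/(not_contains3 no123 erefl); rewrite order_iso123 lt_wv -leqNgt.
Qed.

Lemma no132star_adjacent p t a rest s : x = p ++ t :: a :: rest ->
  s \in p -> s < a -> t != a.+1.
Proof.
move=> def_x s_in lt_sa; apply/eqP => def_t.
apply: (no132star (a := index s p) (b := size p)).
have s_idx : index s p < size p by rewrite index_mem.
rewrite /occ_132star def_x size_cat /= !nth_cat s_idx ltnn subnn.
have -> : (size p).+1 < size p = false by rewrite ltnNge leqnSn.
by rewrite subSnn nth_index //= def_t; lia.
Qed.

(* After reading [rcons p t], s_{132,321} has stack [t :: r] and output [out]. *)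
Definition run_inv (p : seq nat) (t : nat) (r out : seq nat) : Prop :=
  [/\ perm_eq (out ++ t :: r) (rcons p t), pairwise ltn r, pairwise gtn out &
      {in out, forall v, exists2 w, w < v & subseq [:: w; v] p}].

Lemma run_inv_stack_sub p t r out rest : x = p ++ t :: rest ->
  run_inv p t r out -> {subset r <= p}.
Proof.
move=> def_x [perm_p _ _ _] s s_in.
have: uniq (out ++ t :: r).
  rewrite (perm_uniq perm_p); apply: (uniq_prefix (rest := rest)).
  by rewrite def_x cat_rcons.
rewrite cat_uniq /= => /and3P [_ _ /andP [t_notin_r _]].
have := perm_mem perm_p s; rewrite mem_cat inE s_in !orbT mem_rcons inE.
by case/esym/predU1P => [eq_st | //]; rewrite -eq_st s_in in t_notin_r.
Qed.

Lemma run_inv_out_gt p t r out q : x = p ++ q ->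
  run_inv p t r out -> {in out & q, forall v c, c < v}.
Proof.
move=> def_x [_ _ _ out_rise] v c /out_rise [w lt_wv sub_wv] c_in.
have v_in : v \in p by apply: (mem_subseq sub_wv); rewrite !inE eqxx orbT.
rewrite ltn_neqAle (disjoint_cat def_x v_in c_in).
exact: le_after_rise def_x sub_wv c_in lt_wv.
Qed.

Lemma run_inv_pop p t r out a rest s : x = p ++ t :: a :: rest ->
  run_inv p t r out -> s \in r -> a < s < t ->
  run_inv (rcons p t) a r (rcons out t).
Proof.
move=> def_x inv s_in lt_ast; have out_gt := run_inv_out_gt def_x inv.
have [perm_p r_sorted out_sorted out_rise] := inv.
split => //.
- apply: perm_trans (perm_cat_cons_rcons _ _ _) _.
  by rewrite cat_rcons; apply: perm_rcons2.
- rewrite pairwise_rcons out_sorted andbT; apply/allP => v v_in.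
  by apply: out_gt; rewrite ?mem_head.
- move=> v; rewrite mem_rcons inE => /predU1P [-> | /out_rise [w lt_wv sub_wv]].
    by exists s; [case/andP: lt_ast | apply/subseq2_rcons/(run_inv_stack_sub def_x inv)].
  by exists w => //; apply: subseq_trans sub_wv (subseq_rcons _ _).
Qed.

Lemma run_inv_top_lt p t r1 r' out a rest : x = p ++ t :: a :: rest ->
  run_inv p t (r1 :: r') out ->
  ~~ has (fun s => (s < t < a) || (a < s < t)) (r1 :: r') -> t < r1.
Proof.
move=> def_x inv /hasPn no_pop.
have r1_in : r1 \in p by apply: run_inv_stack_sub def_x inv _ (mem_head _ _).
have def_x' : x = rcons p t ++ a :: rest by rewrite cat_rcons.
have r1p_in : r1 \in rcons p t by rewrite mem_rcons inE r1_in orbT.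
have t_in : t \in rcons p t by rewrite mem_rcons mem_head.
have [// | lt_r1t | eq_tr1] := ltngtP t r1; last first.
  by move: (disjoint_cat def_x r1_in (mem_head _ _)); rewrite eq_tr1 eqxx.
exfalso; move: (no_pop r1 (mem_head _ _)); rewrite lt_r1t andbT /= negb_or -!leqNgt.
case/andP => le_at le_r1a.
have lt_at : a < t by rewrite ltn_neqAle le_at (disjoint_cat def_x' t_in (mem_head _ _)).
have lt_r1a : r1 < a.
  by rewrite ltn_neqAle le_r1a eq_sym (disjoint_cat def_x' r1p_in (mem_head _ _)).
have lt_a1t : a.+1 < t.
  by rewrite ltn_neqAle lt_at eq_sym (no132star_adjacent def_x r1_in lt_r1a).
(* The value a+1 lies strictly between r1 and t; no part of x can hold it. *)
have : a.+1 \in x.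
  have := x_perm; rewrite /is_perm => /perm_mem mem_x.
  have : t \in x by rewrite def_x mem_cat mem_head orbT.
  by rewrite !mem_x !mem_iota /= !add1n => /andP [_ /(leq_trans lt_a1t) /ltnW].
rewrite def_x' mem_cat inE (gtn_eqF (ltnSn a)) /= => /orP [a1_in | a1_in].
- have [perm_p _ _ _] := inv.
  move: a1_in; rewrite -(perm_mem perm_p) mem_cat inE.
  case/or3P => [a1_out | /eqP a1_t | a1_r].
  + by move: (run_inv_out_gt def_x inv a1_out (mem_head _ _)); rewrite ltnNge ltnW.
  + by rewrite a1_t ltnn in lt_a1t.
  + by move: (no_pop _ a1_r); rewrite ltnSn lt_a1t orbT.
- have def_x'' : x = rcons (rcons p t) a ++ rest by rewrite cat_rcons.
  move: (le_after_rise def_x'' (subseq2_rcons a r1p_in) a1_in lt_r1a).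
  by rewrite ltnn.
Qed.

Lemma run_inv_push p t r out a rest : x = p ++ t :: a :: rest ->
  run_inv p t r out -> ~~ has (fun s => (s < t < a) || (a < s < t)) r ->
  run_inv (rcons p t) a (t :: r) out.
Proof.
move=> def_x inv no_pop; have [perm_p r_sorted out_sorted out_rise] := inv.
split => //.
- exact: perm_trans (perm_cat_cons_rcons _ _ _) (perm_rcons2 _ perm_p).
- rewrite /= r_sorted andbT; case: r inv r_sorted no_pop {perm_p} => // r1 r' inv.
  case/andP => /allP r1_lt _ no_pop; have lt_tr1 := run_inv_top_lt def_x inv no_pop.
  by rewrite /= lt_tr1; apply/allP => s /r1_lt; apply: ltn_trans.
- move=> v /out_rise [w lt_wv sub_wv].
  by exists w => //; apply: subseq_trans sub_wv (subseq_rcons _ _).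
Qed.

Lemma run_inv_step p t r out a rest : x = p ++ t :: a :: rest ->
  run_inv p t r out ->
  exists r' out', push_step T132_321 a (t :: r) out = (a :: r', out') /\
                  run_inv (rcons p t) a r' out'.
Proof.
move=> def_x inv; have [_ r_sorted _ _] := inv.
rewrite push_step132_321 //; case: ifPn => [/hasP [s s_in] | no_pop]; last first.
  by exists (t :: r), out; split; last apply: run_inv_push def_x inv no_pop.
case/orP => [/andP [lt_st lt_ta] | lt_ast].
  have sub_st : subseq [:: s; t] (rcons p t).
    exact/subseq2_rcons/(run_inv_stack_sub def_x inv).
  have def_x' : x = rcons p t ++ a :: rest by rewrite cat_rcons.
  by move: (le_after_rise def_x' sub_st (mem_head _ _) lt_st); rewrite leqNgt lt_ta.
by exists r, (rcons out t); split; last apply: run_inv_pop def_x inv s_in lt_ast.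
Qed.

Lemma run_invariant p t rest : x = p ++ t :: rest ->
  exists r out, sT_state T132_321 (rcons p t) = (t :: r, out) /\ run_inv p t r out.
Proof.
elim/last_ind: p t rest => [|p t0 IHp] t rest def_x; first by exists [::], [::].
have [r [out [state inv]]] := IHp t0 (t :: rest) (etrans def_x (cat_rcons _ _ _)).
rewrite sT_state_rcons state.
exact: run_inv_step (etrans def_x (cat_rcons _ _ _)) inv.
Qed.

End Run132_321.

Theorem proposition3p6 (n : nat) (x : seq nat) :
  is_perm n x ->
  ~~ contains x [:: 1; 2; 3] ->
  avoids_132star x ->
  Sort_n n [:: 1; 3; 2] [:: 3; 2; 1] x.
Proof.
move=> x_perm no123 no132star; split => //.
case/lastP: x x_perm no123 no132star => [|p t] x_perm no123 no132star.
  by move: (perm_size x_perm); rewrite size_iota => <-.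
have def_x : rcons p t = p ++ [:: t] by rewrite cats1.
have [r [out [state inv]]] := run_invariant x_perm no123 no132star def_x.
have [perm_p r_sorted out_sorted _] := inv.
apply: west_s_231_avoiding; rewrite sT_stateE state /=.
- exact: perm_trans perm_p x_perm.
- apply: avoids231_out_stack => // v v_in.
  exact: (run_inv_out_gt x_perm no123 def_x inv v_in (mem_head _ _)).
Qed.
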